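(* For every $n>2$, let $K_{1,n-1}$ be the star graph on $n$ vertices. Then $\mathrm{ch}_{um}(H_P(K_{1,n-1}))\ge n-1$, while $\chi_{um}(H_P(K_{1,n-1}))=2$.
   Context: For a simple graph $G=(V,E)$, $H_P(G)$ is the hypergraph with vertex set $V$ whose hyperedges are the vertex sets of all simple paths in $G$. A coloring $C\colon V\to\mathbb Z_{>0}$ is unique-maximum if in every hyperedge the maximum color is attained by exactly one vertex. $\chi_{um}(H)$ is the minimum number of colors in a unique-maximum coloring of $H$. The um-choice number $\mathrm{ch}_{um}(H)$ is the minimum $k$ such that for every family $\{L_v\}_{v\in V}$ of sets of positive integers with $|L_v|\ge k$ there is a unique-maximum coloring $C$ with $C(v)\in L_v$ for all $v$. *)

From mathcomp Require Import all_boot.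
Set Implicit Arguments. Unset Strict Implicit. Unset Printing Implicit Defensive.

(* A simple graph is a symmetric irreflexive relation [e : rel T] on a finType. *)

Definition simple_path (T : finType) (e : rel T) (p : seq T) : bool :=
  if p is x :: q then path e x q && uniq p else false.

Definition HP (T : finType) (e : rel T) (S : {set T}) : Prop :=
  exists p, simple_path e p /\ S = [set v in p].

Definition unique_max (T : finType) (C : T -> nat) (S : {set T}) : bool :=
  #|[set v in S | C v == \max_(w in S) C w]| == 1.

Definition um_coloring (T : finType) (H : {set T} -> Prop) (C : T -> nat) : Prop :=
  (forall v, 0 < C v) /\ (forall S, H S -> unique_max C S).

Definition num_colors (T : finType) (C : T -> nat) : nat := size (undup [seq C v | v <- enum T]).

Definition chi_um_is (T : finType) (H : {set T} -> Prop) (k : nat) : Prop :=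
  (exists C, um_coloring H C /\ num_colors C = k) /\
  (forall C, um_coloring H C -> k <= num_colors C).

Definition card_ge (A : nat -> Prop) (k : nat) : Prop :=
  exists s : seq nat, [/\ uniq s, k <= size s & forall x, x \in s -> A x].

Definition um_choosable (T : finType) (H : {set T} -> Prop) (k : nat) : Prop :=
  forall L : T -> nat -> Prop,
    (forall v x, L v x -> 0 < x) ->
    (forall v, card_ge (L v) k) ->
    exists C, um_coloring H C /\ (forall v, L v (C v)).

(* ch_um(H) >= m : every k that works is at least m (ch_um is the least such k) *)
Definition ch_um_ge (T : finType) (H : {set T} -> Prop) (m : nat) : Prop :=
  forall k, um_choosable H k -> m <= k.

(* Star K_{1,n-1} on 'I_n, with center 0: i ~ j iff exactly one of them is 0. *)
Definition star (n : nat) : rel 'I_n :=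
  fun i j => (val i == 0) != (val j == 0).
Arguments star n : clear implicits.

(* In a star every path with at least two vertices passes through the centre,
   so colouring the centre 2 and the leaves 1 is unique-maximum, and an edge
   shows that one colour never suffices.  For the choice number, give the
   centre the list {1, ..., n-2} and every leaf the list {n-1, ..., 2n-4}.
   Then every leaf gets a colour above the centre's, so two leaves of equal
   colour would be the two maxima of the path leaf-centre-leaf; hence the
   n-1 leaves need n-1 distinct colours from a common list of size n-2. *)
From mathcomp Require Import all_boot.
Set Implicit Arguments. Unset Strict Implicit.

Section UniqueMax.

Variables (T : finType) (C : T -> nat) (S : {set T}).

Lemma bigmax_maximal x :
  x \in S -> (forall w, w \in S -> C w <= C x) -> \max_(w in S) C w = C x.
Proof.
move=> xS le_x; apply/eqP; rewrite eqn_leq leq_bigmax_cond // andbT.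
exact/bigmax_leqP.
Qed.

Lemma unique_max_at x :
  x \in S -> (forall w, w \in S -> w != x -> C w < C x) -> unique_max C S.
Proof.
move=> xS lt_x.
have max_x : \max_(w in S) C w = C x.
  apply: bigmax_maximal xS _ => w wS.
  by case: (eqVneq w x) => [-> // | /(lt_x w wS) /ltnW].
rewrite /unique_max max_x (_ : [set v in S | _] = [set x]) ?cards1 //.
apply/setP => v; rewrite !inE; case: (eqVneq v x) => [-> | vx].
  by rewrite xS eqxx.
by case vS: (v \in S) => //=; rewrite ltn_eqF // lt_x.
Qed.

Lemma unique_maxN_tie x y :
  x \in S -> y \in S -> x != y -> C x = C y ->
  (forall w, w \in S -> C w <= C x) -> ~~ unique_max C S.
Proof.
move=> xS yS xy Cxy le_x; rewrite /unique_max (bigmax_maximal xS le_x).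
have : #|[set x; y]| <= #|[set v in S | C v == C x]|.
  apply/subset_leq_card/subsetP => v; rewrite !inE.
  by case/orP => /eqP ->; rewrite ?xS ?yS Cxy eqxx.
by rewrite cards2 xy; case: eqP => // ->.
Qed.

End UniqueMax.

Lemma um_coloring_max_neq (T : finType) (e : rel T) (C : T -> nat) p x y :
  um_coloring (HP e) C -> simple_path e p -> x \in p -> y \in p -> x != y ->
  (forall w, w \in p -> C w <= C x) -> C x != C y.
Proof.
move=> [_ umC] sp xp yp xy le_x; apply/eqP => Cxy.
have /negP[] : ~~ unique_max C [set v in p].
  by apply: unique_maxN_tie Cxy _; rewrite ?inE // => w; rewrite inE => /le_x.
by apply: umC; exists p.
Qed.

Lemma um_coloring_edge_neq (T : finType) (e : rel T) (C : T -> nat) x y :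
  um_coloring (HP e) C -> e x y -> x != y -> C x != C y.
Proof.
move=> umC exy xy; apply/negP => /eqP Cxy.
have/eqP[] // : C x != C y.
apply: (um_coloring_max_neq (p := [:: x; y]) umC _ _ _ xy).
- by rewrite /simple_path /= exy inE xy.
- by rewrite inE eqxx.
- by rewrite !inE eqxx orbT.
- by move=> w; rewrite !inE => /orP[] /eqP ->; rewrite Cxy.
Qed.

Section NumColors.

Variables (T : finType) (C : T -> nat).

Lemma num_colors_gt1 x y : C x != C y -> 1 < num_colors C.
Proof.
move=> Cxy; apply: (uniq_leq_size (s1 := [:: C x; C y])).
  by rewrite /= inE Cxy.
by move=> c; rewrite mem_undup !inE => /orP[] /eqP ->; apply/map_f/mem_enum.
Qed.

Lemma num_colors_eq2 a b x y :
  a != b -> C x = a -> C y = b -> (forall v, (C v == a) || (C v == b)) ->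
  num_colors C = 2.
Proof.
move=> ab Cx Cy Cab.
have colorsE : undup [seq C v | v <- enum T] =i [:: a; b].
  move=> c; rewrite mem_undup !inE; apply/mapP/idP => [[v _ ->] // | ].
  by case/orP => /eqP ->; [exists x | exists y]; rewrite ?mem_enum.
rewrite /num_colors (perm_size (uniq_perm (undup_uniq _) _ colorsE)) //=.
by rewrite inE ab.
Qed.

End NumColors.

Lemma card_ge_interval a l k : k <= l -> card_ge (fun x => a <= x < a + l) k.
Proof.
move=> kl; exists (iota a l).
by split=> [|| x]; rewrite ?iota_uniq ?size_iota // mem_iota.
Qed.

Lemma inj_card_le_interval (T : finType) (f : T -> nat) a l :
  injective f -> (forall x, a <= f x < a + l) -> #|T| <= l.
Proof.
move=> f_inj f_in; rewrite cardE -(size_map f) -(size_iota a l).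
apply: uniq_leq_size; first by rewrite map_inj_uniq ?enum_uniq.
by move=> _ /mapP[x _ ->]; rewrite mem_iota.
Qed.

Section Star.

Variable m : nat.

Local Notation G := (star m.+1).
Local Notation leaf := (@lift m.+1 ord0).

Lemma star_edge_center u v : G u v -> (u == ord0) || (v == ord0).
Proof.
rewrite /star -!val_eqE /=.
by case: (val u == 0); case: (val v == 0) => //; case: (val v).
Qed.

Lemma star_leafP v : v != ord0 -> exists i, v = leaf i.
Proof. by case: (unliftP ord0 v) => [i -> | -> /eqP] //; exists i. Qed.

Lemma star_path_center p : simple_path G p -> 1 < size p -> ord0 \in p.
Proof.
case: p => [// | u [// | v r]] /andP[/andP[uv _] _] _.
by case/orP: (star_edge_center uv) => /eqP <-; rewrite !inE eqxx ?orbT.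
Qed.

Lemma star_center_peak_um (C : 'I_m.+1 -> nat) :
  (forall v, 0 < C v) -> (forall i, C (leaf i) < C ord0) ->
  um_coloring (HP G) C.
Proof.
move=> Cpos Cleaf; split=> // _ [p [sp ->]].
have [p0 | p0] := boolP (ord0 \in p).
  apply: (unique_max_at (x := ord0)); first by rewrite inE.
  by move=> w _ /star_leafP[i ->]; apply: Cleaf.
case: p sp p0 => [// | u [| v r]] sp p0; last first.
  by rewrite star_path_center in p0.
by apply: (unique_max_at (x := u)) => [| w]; rewrite !inE // => ->.
Qed.

Lemma star_leaf_colors_inj (C : 'I_m.+1 -> nat) :
  um_coloring (HP G) C -> (forall i, C ord0 < C (leaf i)) ->
  injective (fun i => C (leaf i)).
Proof.
move=> umC Cleaf i j Cij; apply/eqP/negPn/negP => ij.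
have leaf_ij : leaf i != leaf j by rewrite (inj_eq (@lift_inj _ ord0)).
suff : C (leaf i) != C (leaf j) by rewrite Cij eqxx.
apply: (um_coloring_max_neq (e := G) (p := [:: leaf i; ord0; leaf j])) => //.
- by rewrite /simple_path /= !inE negb_or leaf_ij eq_sym neq_lift.
- by rewrite !inE eqxx.
- by rewrite !inE eqxx !orbT.
- move=> w; rewrite !inE => /or3P[] /eqP ->; rewrite ?leqnn //.
  + exact/ltnW/Cleaf.
  + by rewrite Cij.
Qed.

Lemma star_ch_um_ge : ch_um_ge (HP G) m.
Proof.
move=> k choosable; rewrite leqNgt; apply/negP => km.
have m_gt0 : 0 < m by apply: leq_ltn_trans km.
pose L (v : 'I_m.+1) x :=
  if v == ord0 then 1 <= x < 1 + m.-1 else m <= x < m + m.-1.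
have L_pos v x : L v x -> 0 < x.
  by rewrite /L; case: ifP => _ /andP[x_ge _] //; apply: leq_trans x_ge.
have L_card v : card_ge (L v) k.
  by rewrite /L; case: (v == ord0); apply: card_ge_interval; rewrite -ltnS prednK.
have [C [umC CL]] := choosable L L_pos L_card.
have Cleaf i : m <= C (leaf i) < m + m.-1.
  by have := CL (leaf i); rewrite /L eq_sym (negbTE (neq_lift _ _)).
have Ccenter : C ord0 < m.
  by have := CL ord0; rewrite /L eqxx add1n prednK // => /andP[].
have/inj_card_le_interval : injective (fun i => C (leaf i)).
  by apply: star_leaf_colors_inj => // i; case/andP: (Cleaf i) => /(leq_trans Ccenter).
by move/(_ _ _ Cleaf); rewrite card_ord leqNgt ltn_predL m_gt0.
Qed.

Lemma star_chi_um (m_gt0 : 0 < m) : chi_um_is (HP G) 2.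
Proof.
pose i0 : 'I_m := Ordinal m_gt0.
have edge_colors C : um_coloring (HP G) C -> C ord0 != C (leaf i0).
  by move/um_coloring_edge_neq; apply; rewrite // eq_sym neq_lift.
split=> [| C /edge_colors /num_colors_gt1 //].
pose C (v : 'I_m.+1) := if v == ord0 then 2 else 1.
have umC : um_coloring (HP G) C.
  apply: star_center_peak_um => [v | i]; rewrite /C; first by case: ifP.
  by rewrite eq_sym (negbTE (neq_lift _ _)).
exists C; split=> //.
apply: (num_colors_eq2 (a := 2) (b := 1) (x := ord0) (y := leaf i0)) => //.
by move=> v; rewrite /C; case: ifP.
Qed.

End Star.

Theorem mainTheorem10 (n : nat) (hn : 2 < n) :
  ch_um_ge (HP (star n)) n.-1 /\ chi_um_is (HP (star n)) 2.
Proof.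
case: n hn => [// | m] hm; split; first exact: star_ch_um_ge.
by apply: star_chi_um; case: m hm.
Qed.
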